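(* Let $x\in\mathcal{X}$. Then $x$ is bilevel feasible if and only if $c^\top x = g(x_{\mathcal{A}_1})$.
   Context: Single-commodity network pricing setting: $G=(\mathcal{V},\mathcal{A})$ is a directed graph with arc costs $c\ge0$, arcs partitioned into a nonempty set $\mathcal{A}_1\subsetneq\mathcal{A}$ of tolled arcs and toll-free arcs $\mathcal{A}_2=\mathcal{A}\setminus\mathcal{A}_1$, $n=|\mathcal{A}_1|$; $N$ is the node–arc incidence matrix; there is one commodity with origin $o$ and destination $d$ and an $o$–$d$ path of toll-free arcs exists; $b_o=1$, $b_d=-1$, $b_i=0$ otherwise. Let $\mathcal{X}=\{x\in\mathbb{R}^{\mathcal{A}}: Nx=b,\ x\ge0\}$ and, for $x\in\mathbb{R}^{\mathcal{A}}$, let $x_{\mathcal{A}_1}\in\mathbb{R}^n$ be its restriction to $\mathcal{A}_1$. Define $f:\mathbb{R}^n\to\mathbb{R}\cup\{-\infty\}$ by $f(t)=\min\{c^\top x+t^\top x_{\mathcal{A}_1}: x\in\mathcal{X}\}$ for $t\ge0$ and $f(t)=-\infty$ otherwise, and $g(w)=\sup_{t\in\mathbb{R}^n}\{f(t)-t^\top w\}$ for $w\in\mathbb{R}^n$. A point $x\in\mathcal{X}$ is called bilevel feasible if the hyperplane $\{(t,z)\in\mathbb{R}^n\times\mathbb{R}: z=-c^\top x-t^\top x_{\mathcal{A}_1}\}$ supports the epigraph $\operatorname{epi}(-f)$, i.e. $\operatorname{epi}(-f)\subseteq\{(t,z): z\ge -c^\top x - t^\top x_{\mathcal{A}_1}\}$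 and the hyperplane meets $\operatorname{epi}(-f)$. *)

From HB Require Import structures.
From mathcomp Require Import all_boot all_order all_algebra.
From mathcomp Require Import all_classical all_reals all_analysis.
Unset Printing Implicit Defensive.
Import Order.TTheory GRing.Theory Num.Theory.
Local Open Scope classical_set_scope.
Local Open Scope ring_scope.

Section NetworkPricing.
Variables (R : realType) (V A : finType) (src tgt : A -> V).

(* index type of tolled arcs: R^n with n = #|A1| is modelled as tolled A1 -> R *)
Definition tolled (A1 : {set A}) := {a : A | a \in A1}.

Definition incidence (i : V) (a : A) : R := (src a == i)%:R - (tgt a == i)%:R.

Definition supply (o d : V) (i : V) : R :=
  if i == o then 1 else if i == d then -1 else 0.

Definition flows (o d : V) : set (A -> R) :=
  [set x | (forall i, \sum_(a : A) incidence i a * x a = supply o d i)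
           /\ (forall a, 0 <= x a)].

Fixpoint walk (u v : V) (s : seq A) : bool :=
  match s with
  | [::] => u == v
  | a :: s' => (src a == u) && walk (tgt a) v s'
  end.

Definition cost (c x : A -> R) : R := \sum_(a : A) c a * x a.

Definition restr (A1 : {set A}) (x : A -> R) : tolled A1 -> R :=
  fun a => x (val a).


Definition dot (A1 : {set A}) (t w : tolled A1 -> R) : R :=
  \sum_(a : tolled A1) t a * w a.

Definition fval (c : A -> R) (A1 : {set A}) (o d : V) (t : tolled A1 -> R)
  : \bar R :=
  if `[< forall a, 0 <= t a >] then
    ereal_inf [set (cost c x + dot A1 t (restr A1 x))%:E | x in flows o d]
  else -oo%E.

Definition gval (c : A -> R) (A1 : {set A}) (o d : V) (w : tolled A1 -> R)
  : \bar R :=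
  ereal_sup (range (fun t : tolled A1 -> R => (fval c A1 o d t - (dot A1 t w)%:E)%E)).

Definition epi_negf (c : A -> R) (A1 : {set A}) (o d : V)
  : set ((tolled A1 -> R) * R) :=
  [set tz | (- fval c A1 o d tz.1 <= tz.2%:E)%E].

(* x is bilevel feasible: the hyperplane z = -c^T x - t^T x_{A1} supports epi(-f) *)
Definition bilevel_feasible (c : A -> R) (A1 : {set A}) (o d : V) (x : A -> R)
  : Prop :=
  epi_negf c A1 o d `<=` [set tz | - cost c x - dot A1 tz.1 (restr A1 x) <= tz.2]
  /\ exists tz, epi_negf c A1 o d tz /\ tz.2 = - cost c x - dot A1 tz.1 (restr A1 x).

End NetworkPricing.

From HB Require Import structures.
From mathcomp Require Import all_boot all_order all_algebra.
From mathcomp Require Import all_classical all_reals all_analysis.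
From mathcomp Require Import lra.
Import Order.TTheory GRing.Theory Num.Theory.
Import numFieldNormedType.Exports ArrowAsProduct.
Local Open Scope classical_set_scope.
Local Open Scope ring_scope.

(* A toll vector t >= 0 makes x an optimal follower flow exactly when
   f(t) = c^T x + t^T x_{A1}, i.e. when the hyperplane of x supports epi(-f). As
   f(t) - t^T x_{A1} <= c^T x for every t, bilevel feasibility thus says that the
   supremum defining g(x_{A1}) equals c^T x and is attained; attainment is the real
   content. An e-optimal toll vector stays e-optimal when capped at the cost M of a
   toll-free o-d walk, because a walk paying a capped toll already costs at least M,
   and e-optimality need only be checked on walks, since shortest-path potentials
   show that every flow costs at least as much as the cheapest walk. The capped
   tolls lie in the compact box [0, M]^n, and a cluster point of e-optimal tolls as
   e -> 0 is optimal. *)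

Lemma compact_nested_bigcap_neq0 (T : topologicalType) (K : set T) (C : nat -> set T) :
  compact K -> (forall n, closed (C n)) ->
  (forall m n, (m <= n)%N -> C n `<=` C m) ->
  (forall n, K `&` C n !=set0) -> K `&` \bigcap_n C n !=set0.
Proof.
move=> Kc Ccl Cdec KCn.
have finIKC : finI setT (fun n => K `&` C n).
  move=> D _; have [p [Kp Cp]] := KCn (\max_(n <- finmap.enum_fset D) n)%N.
  exists p => n nD; split=> //; apply: Cdec Cp; exact: leq_bigmax_seq.
have [|p [Kp clp]] := Kc _ (finI_filter finIKC).
  by exists (K `&` C 0%N); [exact: finI_from1 | move=> ? []].
exists p; split=> // n _; apply: Ccl => B /(clp (K `&` C n)) [].
  by exists (K `&` C n) => //; exact: finI_from1.
by move=> q [[_ Cq] Bq]; exists q.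
Qed.

Section BoxLinearInequalities.
Variables (R : realType) (I : finType).

Lemma linear_form_continuous (al : I -> R) :
  continuous (fun t : I -> R => \sum_i t i * al i).
Proof.
apply: continuous_big => [|i _]; first exact: add_continuous.
by move=> t; apply: continuousM; [exact: proj_continuous | exact: cst_continuous].
Qed.

Lemma box_approx_solution_limit (J : Type) (al : J -> I -> R) (be : J -> R) (M : R) :
  (forall n : nat, exists2 t : I -> R, (forall i, 0 <= t i <= M) &
     forall j, be j - n.+1%:R^-1 <= \sum_i t i * al j i) ->
  exists2 t : I -> R, (forall i, 0 <= t i <= M) &
    forall j, be j <= \sum_i t i * al j i.
Proof.
move=> approx.
pose K := [set t : I -> R | forall i, `[0, M]%classic (t i)].
pose C n := \bigcap_j [set t : I -> R | be j - n.+1%:R^-1 <= \sum_i t i * al j i].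
have [||||t [Kt Ct]] := @compact_nested_bigcap_neq0 _ K C.
- exact: (@tychonoff I (fun=> R) _ (fun i => @segment_compact R 0 M)).
- move=> n; apply: closed_bigI => j _.
  apply: (@preimage_closed _ _ (fun t : I -> R => \sum_i t i * al j i) [set r | _ <= r]).
    by move=> t _; exact: linear_form_continuous.
  exact: closed_ge.
- move=> m n mn t Ct j _; apply: le_trans (Ct j Logic.I); rewrite lerD2l lerN2.
  by rewrite lef_pV2 ?posrE ?ltr0n // ler_nat.
- move=> n; have [t tM tj] := approx n.
  by exists t; split=> [i|j _]; [rewrite /= in_itv; exact: tM | exact: tj].
exists t => [i | j]; first by have := Kt i; rewrite /= in_itv.
rewrite leNgt; apply/negP => /ltr_add_invr [n].
have := Ct n Logic.I j Logic.I; rewrite /= lerBlDr => le_be lt_be.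
by have := lt_le_trans lt_be le_be; rewrite ltxx.
Qed.

End BoxLinearInequalities.

Lemma sum_mul_eq {R : pzSemiRingType} {T : finType} (q : T -> R) (u : T) :
  \sum_i q i * (i == u)%:R = q u.
Proof.
rewrite (bigD1 u) //= eqxx mulr1 big1 ?addr0 // => i /negPf ->; exact: mulr0.
Qed.

Lemma sum_min_mul_nat_ge (R : realDomainType) (I : finType)
    (t : I -> R) (p : I -> nat) (M : R) :
  0 <= M -> (forall i, 0 <= t i) ->
  Num.min (\sum_i t i * (p i)%:R) M <= \sum_i Num.min (t i) M * (p i)%:R.
Proof.
move=> M0 t0; have min0 i : 0 <= Num.min (t i) M by rewrite le_min t0.
case: (boolP [exists i, (0 < p i)%N && (M <= t i)]) =>
  [/existsP[i /andP[pi Mti]] | no_cap].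
  rewrite ge_min; apply/orP; right.
  have rest_ge0 : 0 <= \sum_(j | j != i) Num.min (t j) M * (p j)%:R.
    by apply: sumr_ge0 => j _; rewrite mulr_ge0.
  by rewrite (bigD1 i) //= (min_r Mti) -[leLHS]addr0 lerD // ler_peMr // ler1n.
suff -> : \sum_i Num.min (t i) M * (p i)%:R = \sum_i t i * (p i)%:R by rewrite ge_min lexx.
apply: eq_bigr => i _.
move: no_cap; rewrite negb_exists => /forallP/(_ i); rewrite negb_and -leqNgt leqn0 -ltNge.
by case/orP => [/eqP -> | /ltW/min_l ->]; rewrite ?mulr0.
Qed.

Section Networks.
Variables (R : realType) (V A : finType) (src tgt : A -> V).
Local Notation walk := (walk V A src tgt).
Local Notation incidence := (incidence R V A src tgt).
Local Notation flows := (flows R V A src tgt).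

Definition walk_flow (P : seq A) : A -> R := fun a => (count_mem a P)%:R.

Lemma sum_walk_flow_cons (k : A -> R) a P :
  \sum_b k b * walk_flow (a :: P) b = k a + \sum_b k b * walk_flow P b.
Proof.
rewrite -(sum_mul_eq k a) -big_split; apply: eq_bigr => b _.
by rewrite /walk_flow /= natrD mulrDr eq_sym.
Qed.

Lemma walk_net_outflow u v P : walk u v P ->
  forall i, \sum_a incidence i a * walk_flow P a = (i == u)%:R - (i == v)%:R.
Proof.
elim: P u => [|a P IH] u /=.
  by move=> /eqP -> i; rewrite subrr big1 // => a _; rewrite mulr0.
move=> /andP [/eqP src_a walk_P] i.
rewrite sum_walk_flow_cons (IH _ walk_P) /incidence src_a.
by rewrite [(u == i)]eq_sym [(tgt a == i)]eq_sym addrA subrK.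
Qed.
Arguments walk_net_outflow {u v P}.

Lemma supplyE o d i : o != d -> supply R V o d i = (i == o)%:R - (i == d)%:R.
Proof.
move=> od; rewrite /supply; have [->|io] := eqVneq i o; first by rewrite (negPf od) subr0.
by have [_|_] := eqVneq i d; rewrite /= ?subr0 ?sub0r ?oppr0.
Qed.

Lemma walk_flow_flows {o d P} : o != d -> walk o d P -> flows o d (walk_flow P).
Proof.
move=> od walk_P; split=> [i|a]; last exact: ler0n.
by rewrite (walk_net_outflow walk_P) supplyE.
Qed.

Lemma sum_potential_incidence (q : V -> R) a :
  \sum_i q i * incidence i a = q (src a) - q (tgt a).
Proof.
under eq_bigr => i _ do rewrite mulrBr (eq_sym (src a)) (eq_sym (tgt a)).
by rewrite sumrB !sum_mul_eq.
Qed.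

Lemma flow_potential_difference {o d} (q : V -> R) {y} : o != d -> flows o d y ->
  \sum_a (q (src a) - q (tgt a)) * y a = q o - q d.
Proof.
move=> od [conservation _].
under eq_bigr => a _ do rewrite -sum_potential_incidence big_distrl.
rewrite exchange_big /=.
under eq_bigr => i _ do
  rewrite -(eq_bigr _ (fun a _ => mulrA _ _ _)) -big_distrr /= conservation supplyE // mulrBr.
by rewrite sumrB !sum_mul_eq.
Qed.

Lemma flow_cost_ge_of_walks {o d} {k : A -> R} {L : R} :
  o != d -> (forall a, 0 <= k a) ->
  (forall P, walk o d P -> L <= \sum_a k a * walk_flow P a) ->
  forall y, flows o d y -> L <= \sum_a k a * y a.
Proof.
move=> od k_ge0 walk_ge y y_flow.
(* q u is the shortest-walk distance from u to d, capped at L so that it is defined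
   even when d is unreachable from u; it is a feasible dual potential. *)
pose S u :=
  [set r : R | r = L \/ exists2 P, walk u d P & r = \sum_a k a * walk_flow P a].
pose q u := inf (S u).
have S_lb u : has_lbound (S u).
  exists (Num.min L 0) => r [->|[P _ ->]]; rewrite ge_min ?lexx //.
  by apply/orP; right; apply: sumr_ge0 => a _; rewrite mulr_ge0 ?ler0n.
have S_neq0 u : S u !=set0 by exists L; left.
have q_le_walk u P : walk u d P -> q u <= \sum_a k a * walk_flow P a.
  by move=> walk_P; apply: ge_inf => //; right; exists P.
have qo : L <= q o.
  by apply: lb_le_inf => // r [->|[P walk_P ->]]; [exact: lexx | exact: walk_ge].
have qd : q d <= 0.
  have := q_le_walk d [::] (eqxx d).
  by rewrite big1 // => a _; rewrite /walk_flow mulr0.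
have q_feasible a : q (src a) - q (tgt a) <= k a.
  suff : q (src a) - k a <= q (tgt a) by lra.
  apply: lb_le_inf => // r [->|[P walk_P ->]].
    have : q (src a) <= L by apply: ge_inf => //; left.
    have := k_ge0 a; lra.
  rewrite lerBlDl -sum_walk_flow_cons; apply: q_le_walk.
  by rewrite /= eqxx.
have -> : \sum_a k a * y a =
    \sum_a (k a - (q (src a) - q (tgt a))) * y a + (q o - q d).
  rewrite -(flow_potential_difference q od y_flow) -big_split /=.
  by apply: eq_bigr => a _; rewrite -mulrDl subrK.
rewrite -[leLHS]add0r lerD //; last by rewrite -[L]subr0 lerB.
by apply: sumr_ge0 => a _; rewrite mulr_ge0 ?subr_ge0 //; case: y_flow.
Qed.

Section Tolls.
Variables (c : A -> R) (A1 : {set A}) (o d : V).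
Local Notation flows_od := (flows o d).
Local Notation f := (fval R V A src tgt c A1 o d).
Local Notation g := (gval R V A src tgt c A1 o d).
Local Notation cost_c := (cost R A c).
Local Notation revenue t y := (dot R A A1 t (restr R A A1 y)).

Definition arc_toll (t : tolled A A1 -> R) : A -> R := fun a => oapp t 0 (insub a).

Lemma arc_toll_ge0 t : (forall b, 0 <= t b) -> forall a, 0 <= arc_toll t a.
Proof. by move=> t_ge0 a; rewrite /arc_toll; case: insub. Qed.

Lemma cost_add_revenue t y :
  cost_c y + revenue t y = \sum_a (c a + arc_toll t a) * y a.
Proof.
under [RHS]eq_bigr do rewrite mulrDl.
rewrite big_split /=; congr (_ + _).
rewrite (bigID (fun a => a \in A1)) /= [Y in _ + Y]big1 ?addr0; last first.
  by move=> a aA; rewrite /arc_toll insubN //= mul0r.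
rewrite (big_sub (fun a => a \in A1) (fun a => arc_toll t a * y a)).
by apply: eq_bigr => b _; rewrite /arc_toll valK.
Qed.

Lemma fval_le {t y} : (forall b, 0 <= t b) -> flows_od y ->
  (f t <= (cost_c y + revenue t y)%:E)%E.
Proof.
by move=> t_ge0 y_flow; rewrite /fval asboolT //; apply: ereal_inf_lbound; exists y.
Qed.

Lemma fval_ge {t} r : (forall b, 0 <= t b) ->
  (forall y, flows_od y -> r <= cost_c y + revenue t y) -> (r%:E <= f t)%E.
Proof.
move=> t_ge0 r_le; rewrite /fval asboolT //.
by apply: le_ereal_inf_tmp => _ [y y_flow <-]; rewrite lee_fin; exact: r_le.
Qed.

Lemma epi_negfP t z :
  epi_negf R V A src tgt c A1 o d (t, z) <-> (forall b, 0 <= t b) /\ ((- z)%:E <= f t)%E.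
Proof.
rewrite /epi_negf /= leeNl; split=> [le_ft | [] //]; split=> //.
by apply: contrapT => /asboolPn t_neg; move: le_ft; rewrite /fval (negPf t_neg).
Qed.

Definition eps_optimal_toll (x : A -> R) (e : R) (t : tolled A A1 -> R) :=
  (forall b, 0 <= t b) /\
  forall y, flows_od y -> cost_c x + revenue t x - e <= cost_c y + revenue t y.

Lemma bilevel_feasibleP x : flows_od x ->
  bilevel_feasible R V A src tgt c A1 o d x <-> exists t, eps_optimal_toll x 0 t.
Proof.
move=> x_flow; split=> [[_ [[t z] [+ /= z_eq]]] | [t [t_ge0 x_opt]]].
  rewrite z_eq => /epi_negfP[t_ge0 le_ft].
  exists t; split=> // y y_flow.
  by have := le_trans le_ft (fval_le t_ge0 y_flow); rewrite lee_fin; lra.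
split=> [[s z] /epi_negfP[s_ge0 le_fs] /= | ].
  by move: (le_trans le_fs (fval_le s_ge0 x_flow)); rewrite lee_fin; lra.
exists (t, - cost_c x - revenue t x); split=> //; apply/epi_negfP; split=> //.
by apply: fval_ge => // y /x_opt; lra.
Qed.

Lemma gval_le_cost x : flows_od x -> (g (restr R A A1 x) <= (cost_c x)%:E)%E.
Proof.
move=> x_flow; apply: ge_ereal_sup => _ [t _ <-].
have [t_ge0 | t_neg] := pselect (forall b, 0 <= t b).
  by rewrite leeBlDr // -EFinD; exact: fval_le.
by rewrite /fval (asboolF t_neg) leNye.
Qed.

Lemma cost_le_gval x t :
  eps_optimal_toll x 0 t -> ((cost_c x)%:E <= g (restr R A A1 x))%E.
Proof.
move=> [t_ge0 x_opt].
have ft_le_g : (f t - (revenue t x)%:E <= g (restr R A A1 x))%E.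
  by apply: ereal_sup_ubound; exists t.
apply: le_trans ft_le_g.
by rewrite leeBrDr // -EFinD; apply: fval_ge => // y /x_opt; rewrite subr0.
Qed.

Lemma eps_optimal_toll_exists x e :
  ((cost_c x)%:E <= g (restr R A A1 x))%E -> 0 < e -> exists t, eps_optimal_toll x e t.
Proof.
move=> cx_le_g e_gt0.
have /ereal_sup_gt[_ [t _ <-]] : ((cost_c x - e)%:E < g (restr R A A1 x))%E.
  by apply: lt_le_trans cx_le_g; rewrite lte_fin ltrBlDr ltrDl.
have [t_ge0 lt_ft | t_neg] := pselect (forall b, 0 <= t b); last first.
  by rewrite /fval (asboolF t_neg) /= ltNge leNye.
exists t; split=> // y y_flow; rewrite -lee_fin.
move: lt_ft; rewrite lteBrDr // -EFinD => /ltW/le_trans/(_ (fval_le t_ge0 y_flow)).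
by rewrite !lee_fin; lra.
Qed.

Section Attainment.
Variable P0 : seq A.
Hypotheses (c_ge0 : forall a, 0 <= c a) (od : o != d)
  (P0_toll_free : all (fun a => a \notin A1) P0) (P0_walk : walk o d P0).

Local Notation y0 := (walk_flow P0).

Lemma revenue_toll_free_walk t : revenue t y0 = 0.
Proof.
rewrite /dot big1 // => b _; rewrite /restr /walk_flow.
suff -> : count_mem (val b) P0 = 0%N by rewrite mulr0.
by apply/count_memPn/negP => /(allP P0_toll_free); rewrite (valP b).
Qed.

Lemma eps_optimal_toll_capped {x e t} : flows_od x -> eps_optimal_toll x e t ->
  eps_optimal_toll x e (fun b => Num.min (t b) (cost_c y0)).
Proof.
move=> x_flow [t_ge0 x_opt]; set M := cost_c y0; set t' := fun b => _.
have M_ge0 : 0 <= M by apply: sumr_ge0 => a _; rewrite mulr_ge0 ?ler0n.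
have t'_ge0 b : 0 <= t' b by rewrite le_min t_ge0.
have t'_le_t : revenue t' x <= revenue t x.
  apply: ler_sum => b _; apply: ler_wpM2r; first by case: x_flow => _; apply.
  by rewrite /t' ge_min lexx.
have y0_bound : cost_c x + revenue t x - e <= M.
  by have := x_opt _ (walk_flow_flows od P0_walk); rewrite revenue_toll_free_walk addr0.
split=> // y y_flow; rewrite [leRHS]cost_add_revenue.
apply: (flow_cost_ge_of_walks od) y_flow => [a | P P_walk].
  by rewrite addr_ge0 ?arc_toll_ge0.
rewrite -cost_add_revenue.
have cP_ge0 : 0 <= cost_c (walk_flow P).
  by apply: sumr_ge0 => a _; rewrite mulr_ge0 ?ler0n.
have P_bound := x_opt _ (walk_flow_flows od P_walk).
have : Num.min (revenue t (walk_flow P)) M <= revenue t' (walk_flow P).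
  exact: sum_min_mul_nat_ge.
by rewrite ge_min => /orP[]; lra.
Qed.

Lemma optimal_toll_exists x : flows_od x ->
  (forall e, 0 < e -> exists t, eps_optimal_toll x e t) -> exists t, eps_optimal_toll x 0 t.
Proof.
move=> x_flow approx.
have revenue_diff t y :
    \sum_b t b * (restr R A A1 y b - restr R A A1 x b) = revenue t y - revenue t x.
  by rewrite /dot -sumrB; apply: eq_bigr => b _; rewrite mulrBr.
have [|t t_box t_opt] := @box_approx_solution_limit R _ _
  (fun (y : {y | flows_od y}) (b : tolled A A1) =>
     restr R A A1 (proj1_sig y) b - restr R A A1 x b)
  (fun y => cost_c x - cost_c (proj1_sig y)) (cost_c y0).
  move=> n; set e := n.+1%:R^-1.
  have [t t_opt] : exists t, eps_optimal_toll x e t by apply: approx; rewrite invr_gt0 ltr0n.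
  pose t' b := Num.min (t b) (cost_c y0).
  have [t'_ge0 t'_opt] : eps_optimal_toll x e t' := eps_optimal_toll_capped x_flow t_opt.
  exists t' => [b | [y y_flow]]; first by rewrite t'_ge0 ge_min lexx orbT.
  by rewrite revenue_diff /=; have := t'_opt y y_flow; lra.
exists t; split=> [b | y y_flow]; first by case/andP: (t_box b).
by have := t_opt (exist _ y y_flow); rewrite revenue_diff /=; lra.
Qed.

End Attainment.

End Tolls.

End Networks.

Arguments optimal_toll_exists {R V A src tgt c A1 o d P0}.

Theorem lemma2 (R : realType) (V A : finType) (src tgt : A -> V)
  (c : A -> R) (hc : forall a, 0 <= c a)
  (A1 : {set A}) (hA1ne : (A1 != finset.set0)) (hA1pr : (A1 != finset.setTfor A))
  (o d : V) (hod : o != d)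
  (hpath : exists s : seq A, all (fun a => a \notin A1) s && walk V A src tgt o d s)
  (x : A -> R) (hx : flows R V A src tgt o d x) :
  bilevel_feasible R V A src tgt c A1 o d x <-> (cost R A c x)%:E = gval R V A src tgt c A1 o d (restr R A A1 x).
Proof.
have [P0 /andP[P0_toll_free P0_walk]] := hpath.
rewrite bilevel_feasibleP //; split=> [[t t_opt] | cx_eq_g].
  apply/le_anti/andP; split; last exact: gval_le_cost.
  by apply: cost_le_gval; exact: t_opt.
apply: (optimal_toll_exists hc hod P0_toll_free P0_walk x hx) => e e_gt0.
by apply: eps_optimal_toll_exists; rewrite ?cx_eq_g.
Qed.
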